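(* Fix a positive integer $N$, seed boundary labels $i,j$, and irreducible representations $r,r'$ of the symmetric group $S_N$ with characters $\chi^r,\chi^{r'}$. Let $B_{ij}$ be a set such that the distinguished vacuum element $v$ belongs to $B_{ij}$ if and only if $i=j$, and belongs to it exactly once. For $k\ge1$ put $p_k=\sum_{s\in B_{ij}}x_s^k$, and for $g\in S_N$ let $m_k(g)$ be the number of $k$-cycles in the disjoint cycle decomposition of $g$. Define \[ \mathcal{Z}^{(N)r,r'}_{ij}=\frac{1}{N!}\sum_{g\in S_N}\chi^r(g)\,\chi^{r'}(g)\prod_{k=1}^N p_k^{\,m_k(g)} . \] Then $\mathcal{Z}^{(N)r,r'}_{ij}$ is a good partition function: every coefficient of every monomial $\prod_s x_s^{M_s}$ in it is an integer, and the coefficient of the vacuum monomial $x_v^N$ equals $1$ if $i=j$ and $r=r'$, and $0$ otherwise.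
   Context: Model of the seed open-string partition functions. For seed boundary labels $i,j$, the open-string partition function $Z_{ij}(\tau)$ is encoded as the formal sum $Z_{ij}=\sum_{s\in B_{ij}}x_s$ in commuting indeterminates $x_s$. The set $B_{ij}$, a basis of seed open-string states, may be infinite; all expressions are formal power series in the $x_s$. Replacing $\tau$ by $k\tau$ corresponds to replacing each $x_s$ by $x_s^k$, so $p_k=\sum_{s\in B_{ij}}x_s^k$ represents $Z_{ij}(k\tau)$. A state of the orbifold open-string channel corresponds to a monomial $\prod_s x_s^{M_s}$ with $\sum_s M_s=N$. Its multiplicity is the coefficient of that monomial. Characters of $S_N$ are real-valued class functions. *)

From HB Require Import structures.
From mathcomp Require Import all_boot all_order all_algebra all_fingroup all_field all_character.
From mathcomp Require Import mpoly.
Set Implicit Arguments. Unset Strict Implicit. Unset Printing Implicit Defensive.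
Import Order.TTheory GRing.Theory Num.Theory.
Local Open Scope ring_scope.

Definition cycle_count (N : nat) (g : 'S_N) (k : nat) : nat :=
  #|[set c in porbits g | #|c| == k]|.

(* p_k restricted to a finite family of n states, variable a <-> a-th state *)
Definition power_sum (n k : nat) : {mpoly algC[n]} := \sum_(a < n) 'X_a ^+ k.

Definition Zorb (N n : nat) (r r' : Iirr [set: 'S_N]%G) : {mpoly algC[n]} :=
  (N`!%:R)^-1 *: \sum_(g : 'S_N)
     ('chi_r g * 'chi_r' g) *: \prod_(1 <= k < N.+1) power_sum n k ^+ cycle_count g k.

(* exponent vector of the monomial prod_{s in M} x_s (M a multiset, given as a
   list) w.r.t. the list of states S *)
Definition monomial_of (T : eqType) (S M : seq T) : 'X_{1..size S} :=
  [multinom count_mem (tnth (in_tuple S) a) M | a < size S].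

(* Coefficient of the monomial prod_{s in M} x_s in Z^{(N) r,r'}_{ij}, where the
   state basis is B.  It is computed in the truncation to the finitely many
   variables occurring in M; it is 0 if M uses a variable not in B. *)
Definition orbCoef (T : eqType) (B : pred T) (N : nat) (r r' : Iirr [set: 'S_N]%G)
    (M : seq T) : algC :=
  if all B M then (Zorb (size (undup M)) r r')@_(monomial_of (undup M) M) else 0.

From HB Require Import structures.
From mathcomp Require Import all_boot all_order all_algebra all_fingroup all_field all_character.
From mathcomp Require Import mpoly.
Set Implicit Arguments. Unset Strict Implicit. Unset Printing Implicit Defensive.
Import Order.TTheory GRing.Theory Num.Theory.
Local Open Scope ring_scope.

(* The coefficient of x^m in prod_k p_k^(m_k(g)) = prod_(cycles c of g) p_|c|
   counts the colourings of {1..N} by the states that are constant on the cycles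
   of g and have content m, i.e. the colourings of content m fixed by g.  These
   numbers form the permutation character pi_m of S_N acting on colourings, so
   the coefficient of x^m in Z is the multiplicity <chi_r pi_m, chi_r'>, a natural
   number; here we use that characters of S_N are real, every permutation being
   conjugate to its inverse.  For x_v^N there is a single colouring, pi_m = 1 and
   the coefficient is <chi_r, chi_r'> = delta_(r r'); if i <> j then v is not a
   state and the coefficient is 0. *)

Lemma porbit_self (T : finType) (s : {perm T}) x : porbit s (s x) = porbit s x.
Proof. by have := porbit_perm s 1 x; rewrite expg1. Qed.

Lemma perm_expgV_eq (T : finType) (u : {perm T}) a b x :
  (u ^+ a)%g x = (u ^+ b)%g x -> (u^-1 ^+ a)%g x = (u^-1 ^+ b)%g x.
Proof.
move=> Eab.
rewrite -{1}(permK (u ^+ b)%g x) -Eab -{2}(permK (u ^+ a)%g x) -!expgVn -!permM.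
by rewrite -!expgD addnC.
Qed.

Section PermConjInv.

Variables (T : finType) (s : {perm T}).

Definition porbit_rep x := odflt x [pick y in porbit s x].

Lemma porbit_rep_in x : porbit_rep x \in porbit s x.
Proof. by rewrite /porbit_rep; case: pickP => //= _; rewrite porbit_id. Qed.

Lemma eq_porbit_rep x y : porbit s x = porbit s y -> porbit_rep x = porbit_rep y.
Proof.
rewrite /porbit_rep => ->.
by case: pickP => //= /(_ y); rewrite porbit_id.
Qed.

Lemma porbit_rep_perm x : porbit_rep (s x) = porbit_rep x.
Proof. exact/eq_porbit_rep/porbit_self. Qed.

Lemma porbit_rep_exp x : exists k, (s ^+ k)%g (porbit_rep x) == x.
Proof.
have : x \in porbit s (porbit_rep x) by rewrite porbit_sym porbit_rep_in.
by case/porbitP => k Ek; exists k; rewrite -Ek.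
Qed.

Definition porbit_exp x := xchoose (porbit_rep_exp x).

Lemma porbit_expK x : (s ^+ porbit_exp x)%g (porbit_rep x) = x.
Proof. exact/eqP/(xchooseP (porbit_rep_exp x)). Qed.

Definition porbit_reflect x := (s^-1 ^+ porbit_exp x)%g (porbit_rep x).

Lemma porbit_reflect_perm x : porbit_reflect (s x) = s^-1%g (porbit_reflect x).
Proof.
rewrite /porbit_reflect porbit_rep_perm -permM -expgSr.
apply: perm_expgV_eq; rewrite expgSr permM !porbit_expK.
by rewrite -{1}(porbit_rep_perm x) porbit_expK.
Qed.

Lemma porbit_porbit_reflect x : porbit s (porbit_reflect x) = porbit s x.
Proof.
rewrite -porbitV porbit_perm porbitV.
by apply/eqP; rewrite eq_porbit_mem porbit_rep_in.
Qed.

Lemma porbit_reflect_inj : injective porbit_reflect.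
Proof.
move=> x y Exy.
have Erep : porbit_rep x = porbit_rep y.
  by apply: eq_porbit_rep; rewrite -porbit_porbit_reflect Exy porbit_porbit_reflect.
move: Exy; rewrite /porbit_reflect Erep => /perm_expgV_eq; rewrite invgK.
by rewrite porbit_expK -Erep porbit_expK.
Qed.

Lemma perm_conjg_inv : exists t : {perm T}, (s ^ t)%g = s^-1%g.
Proof.
exists (perm porbit_reflect_inj); apply/permP => x.
rewrite -{1}(permKV (perm porbit_reflect_inj) x) conjgE !permM permK permE.
by rewrite porbit_reflect_perm -(permE porbit_reflect_inj) permKV.
Qed.

End PermConjInv.

Lemma cfConjC_irr_Sn N (r : Iirr [set: 'S_N]%G) : ('chi_r)^*%CF = 'chi_r.
Proof.
apply/cfunP => g; rewrite cfConjCE -char_inv ?irr_char //.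
by have [t <-] := perm_conjg_inv g; rewrite cfunJ ?inE.
Qed.

Lemma permutation_char (gT : finGroupType) (G : {group gT}) (X : finType)
    (act : X -> gT -> X) :
    (forall x, act x 1%g = x) -> (forall x g h, act x (g * h)%g = act (act x g) h) ->
  exists2 pi : 'CF(G), pi \is a character &
    forall g, g \in G -> pi g = #|[set x | act x g == x]|%:R.
Proof.
move=> act1 actM.
pose rG g : 'M[algC]_#|X| := \matrix_(i, j) (act (enum_val i) g == enum_val j)%:R.
have rG_repr : mx_repr G rG.
  split=> [|g h _ _]; apply/matrixP => i k; rewrite !mxE.
    by rewrite act1 (inj_eq enum_val_inj).
  rewrite (bigD1 (enum_rank (act (enum_val i) g))) //= big1 ?addr0.
    by rewrite !mxE enum_rankK eqxx mul1r actM.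
  move=> j; rewrite !mxE -(inj_eq enum_val_inj) enum_rankK eq_sym.
  by case: eqP => // _ _; rewrite mul0r.
exists (cfRepr (MxRepresentation rG_repr)); first exact: cfRepr_char.
move=> g Gg; rewrite cfunE Gg mulr1n /mxtrace /=.
under eq_bigr do rewrite mxE.
rewrite -(big_enum_val (fun x => (act x g == x)%:R)) /= -sum1dep_card natr_sum.
by rewrite [RHS]big_mkcond; apply: eq_bigr => x _; case: (_ == _).
Qed.
Section Colorings.

Variables N n : nat.
Implicit Types (g : 'S_N) (phi : {ffun 'I_N -> 'I_n}) (m : 'X_{1..n}).

Definition cycle_constant g phi := [forall x, phi (g x) == phi x].

Definition coloring_content phi : 'X_{1..n} := (\sum_(x < N) U_(phi x))%MM.

Definition colorings g m :=
  [set phi | cycle_constant g phi & coloring_content phi == m].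

Lemma cycle_constant_porbit g phi x y :
  cycle_constant g phi -> y \in porbit g x -> phi y = phi x.
Proof.
move=> /forallP phi_g /porbitP[k ->]; elim: k => [|k IHk].
  by rewrite expg0 perm1.
by rewrite expgSr permM (eqP (phi_g _)).
Qed.

Lemma cycle_count0 g : cycle_count g 0 = 0%N.
Proof.
apply/eqP; rewrite cards_eq0; apply/eqP/setP => c; rewrite !inE.
by apply/andP => -[/imsetP[x _ ->]]; rewrite (negPf (card_porbit_neq0 _ _)).
Qed.

Lemma prod_power_sum_cycle_count g :
  \prod_(1 <= k < N.+1) power_sum n k ^+ cycle_count g k
    = \prod_(c in porbits g) power_sum n #|c|.
Proof.
have cardN (c : {set 'I_N}) : (#|c| < N.+1)%N.
  by rewrite ltnS -[X in (_ <= X)%N](card_ord N) max_card.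
transitivity (\prod_(k < N.+1) power_sum n k ^+ cycle_count g k).
  by rewrite [RHS]big_ord_recl cycle_count0 expr0 mul1r big_add1 big_mkord.
rewrite [RHS](partition_big (fun c : {set 'I_N} => inord #|c| : 'I_N.+1) predT) //=.
apply: eq_bigr => k _.
rewrite (eq_bigr (fun=> power_sum n k)) => [|c /andP[_ /eqP <-]]; last first.
  by rewrite inordK.
rewrite prodr_const; congr (_ ^+ _); apply: eq_card => c.
by rewrite inE [RHS]unfold_in /= -val_eqE /= inordK.
Qed.

Definition porbit_coloring g (f : {ffun {set 'I_N} -> 'I_n}) : {ffun 'I_N -> 'I_n} :=
  [ffun x => f (porbit g x)].

Definition porbits_coloring (a0 : 'I_n) g phi : {ffun {set 'I_N} -> 'I_n} :=
  [ffun c => if c \in porbits g then odflt a0 (omap phi [pick x in c]) else a0].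

Lemma cycle_constant_porbit_coloring g f : cycle_constant g (porbit_coloring g f).
Proof. by apply/forallP => x; rewrite !ffunE porbit_self. Qed.

Lemma porbits_coloringK a0 g phi :
  cycle_constant g phi -> porbit_coloring g (porbits_coloring a0 g phi) = phi.
Proof.
move=> phi_g; apply/ffunP => x; rewrite !ffunE imset_f //.
case: pickP => [y /= /(cycle_constant_porbit phi_g) // | /(_ x)].
by rewrite porbit_id.
Qed.

Lemma porbit_coloringK a0 g f :
  (porbits_coloring a0 g (porbit_coloring g f) == f)
    = (f \in pffun_on a0 (mem (porbits g)) predT).
Proof.
apply/eqP/pffun_onP => [<- | [/supportP f_supp _]].
  by split=> [|c _ //]; apply/supportP => c /negPf; rewrite ffunE => ->.
apply/ffunP => c; rewrite ffunE; case: ifP => [/imsetP[x _ ->] | /negbT/f_supp //].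
case: pickP => [y /= x_y | /(_ x)]; last by rewrite porbit_id.
by rewrite ffunE; congr (f _); apply/eqP; rewrite eq_porbit_mem.
Qed.

Lemma mpolyX_content_porbit_coloring g f :
  'X_[coloring_content (porbit_coloring g f)]
    = \prod_(c in porbits g) 'X_(f c) ^+ #|c| :> {mpoly algC[n]}.
Proof.
rewrite /coloring_content -mprodXE (partition_big (porbit g) (mem (porbits g))) //.
  apply: eq_bigr => _ /imsetP[z _ ->].
  rewrite (eq_bigr (fun=> 'X_(f (porbit g z)))) => [|x /eqP <-]; last by rewrite ffunE.
  rewrite prodr_const; congr (_ ^+ _); apply: eq_card => x.
  by rewrite -[LHS]/(porbit g x == porbit g z) eq_porbit_mem.
by move=> x _; apply: imset_f.
Qed.

Lemma prod_power_sum_porbits (a0 : 'I_n) g :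
  \prod_(c in porbits g) power_sum n #|c|
    = \sum_(phi | cycle_constant g phi) 'X_[coloring_content phi].
Proof.
rewrite /power_sum (big_distr_big a0) /=.
rewrite [RHS](reindex_onto (porbit_coloring g) (porbits_coloring a0 g)) /=.
  apply: eq_big => [f | f _]; last by rewrite mpolyX_content_porbit_coloring.
  by rewrite cycle_constant_porbit_coloring porbit_coloringK.
by move=> phi /porbits_coloringK.
Qed.

Definition recolor phi g : {ffun 'I_N -> 'I_n} := [ffun x => phi (g^-1%g x)].

Lemma recolor_fixed g phi : (recolor phi g == phi) = cycle_constant g phi.
Proof.
apply/eqP/forallP => [phi_g x | phi_g]; first by rewrite -{1}phi_g ffunE permK.
by apply/ffunP => x; rewrite ffunE -{2}(permKV g x) (eqP (phi_g _)).
Qed.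

Lemma coloring_content_recolor g phi :
  coloring_content (recolor phi g) = coloring_content phi.
Proof.
rewrite /coloring_content [RHS](reindex_inj (@perm_inj _ g^-1%g)).
by apply: eq_bigr => x _; rewrite ffunE.
Qed.

Lemma colorings_char m :
  exists2 pi : 'CF([set: 'S_N]), pi \is a character &
    forall g, pi g = #|colorings g m|%:R.
Proof.
pose X := {phi | coloring_content phi == m}.
pose act (x : X) g : X := insubd x (recolor (val x) g).
have actE x g : val (act x g) = recolor (val x) g.
  by rewrite insubdK // -topredE /= coloring_content_recolor (valP x).
have act1 x : act x 1%g = x.
  by apply: val_inj; rewrite actE; apply/ffunP => y; rewrite ffunE invg1 perm1.
have actM x g h : act x (g * h)%g = act (act x g) h.
  by apply: val_inj; rewrite !actE; apply/ffunP => y; rewrite !ffunE invMg permM.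
have [pi pi_char piE] := permutation_char [set: 'S_N]%G act1 actM.
exists pi => // g; rewrite piE ?inE //; congr (_%:R).
rewrite -(card_imset _ val_inj); apply: eq_card => phi; rewrite !inE.
apply/imsetP/andP => [[x] | [phi_g phi_m]].
  by rewrite inE -(inj_eq val_inj) actE recolor_fixed => phi_g ->; rewrite (valP x).
by exists (Sub phi phi_m); rewrite // inE -(inj_eq val_inj) actE recolor_fixed.
Qed.

End Colorings.

Lemma mcoeff_prod_power_sum N n (g : 'S_N) (m : 'X_{1..n}) : (0 < N)%N ->
  (\prod_(1 <= k < N.+1) power_sum n k ^+ cycle_count g k)@_m = #|colorings g m|%:R.
Proof.
move=> N_gt0; rewrite prod_power_sum_cycle_count.
case: n m => [|n] m.
  pose x0 := Ordinal N_gt0.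
  rewrite (bigD1 (porbit g x0)) ?imset_f //= /power_sum big_ord0 mul0r mcoeff0.
  by rewrite (_ : colorings _ _ = set0) ?cards0 //; apply/setP => phi; case: (phi x0).
rewrite (prod_power_sum_porbits ord0) raddf_sum /=.
rewrite /colorings -sum1dep_card big_mkcondr natr_sum; apply: eq_bigr => phi _.
by rewrite mcoeffX; case: eqP.
Qed.

Lemma colorings_monochrome N (g : 'S_N) (m : 'X_{1..1}) :
  (forall a, m a = N) -> colorings g m = setT.
Proof.
move=> m_N; apply/setP => phi; rewrite !inE; apply/andP; split.
  by apply/forallP => x; rewrite [phi (g x)]ord1 [phi x]ord1.
apply/eqP/mnmP => a; rewrite m_N mnm_sumE.
rewrite (eq_bigr (fun=> 1%N)) => [|x _]; last by rewrite mnm1E [phi x]ord1 [a]ord1.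
by rewrite sum1_card card_ord.
Qed.

Lemma mcoeff_Zorb N n (r r' : Iirr [set: 'S_N]%G) (m : 'X_{1..n})
    (pi : 'CF([set: 'S_N])) :
  (0 < N)%N -> (forall g, pi g = #|colorings g m|%:R) ->
  (Zorb n r r')@_m = '['chi_r * pi, 'chi_r'].
Proof.
move=> N_gt0 piE; rewrite /Zorb mcoeffZ raddf_sum cfdotE cardsT card_Sn.
congr (_ * _); apply: eq_big => [g | g _]; first by rewrite inE.
by rewrite /= mcoeffZ mcoeff_prod_power_sum // !cfunE piE -cfConjCE cfConjC_irr_Sn mulrAC.
Qed.

Lemma mcoeff_Zorb_nat N n (r r' : Iirr [set: 'S_N]%G) (m : 'X_{1..n}) :
  (0 < N)%N -> (Zorb n r r')@_m \in Num.nat.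
Proof.
move=> N_gt0; have [pi pi_char piE] := colorings_char N m.
by rewrite (mcoeff_Zorb _ _ N_gt0 piE) Cnat_cfdot_char ?rpredM ?irr_char.
Qed.

Lemma mcoeff_Zorb_vacuum N n (r r' : Iirr [set: 'S_N]%G) (m : 'X_{1..n}) :
  (0 < N)%N -> n = 1%N -> (forall a, m a = N) -> (Zorb n r r')@_m = (r == r')%:R.
Proof.
move=> N_gt0 n1; subst n => m_N.
rewrite (@mcoeff_Zorb _ _ _ _ _ 1) ?mulr1 ?cfdot_irr // => g.
by rewrite cfun1E inE colorings_monochrome // cardsT card_ffun !card_ord exp1n.
Qed.

Lemma undup_nseq (T : eqType) (v : T) k : (0 < k)%N -> undup (nseq k v) = [:: v].
Proof.
case: k => // k _; elim: k => // k IHk.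
by rewrite (_ : nseq k.+2 v = [:: v] ++ nseq k.+1 v) // undup_cat IHk /= in_cons eqxx.
Qed.

Lemma monomial_of_nseq (T : eqType) (v : T) N a :
  monomial_of (undup (nseq N v)) (nseq N v) a = N.
Proof.
rewrite mnmE count_nseq; have := mem_tnth a (in_tuple (undup (nseq N v))).
by rewrite mem_undup mem_nseq => /andP[_ /eqP ->] /=; rewrite eqxx mul1n.
Qed.

Theorem mainTheorem2 (L T : eqType) (N : nat) (i j : L)
    (r r' : Iirr [set: 'S_N]%G) (B : pred T) (v : T) :
  (0 < N)%N ->
  (v \in B <-> i = j) ->
  (forall M : seq T, orbCoef B r r' M \is a Num.int) /\
  orbCoef B r r' (nseq N v) = (if (i == j) && (r == r') then 1 else 0).
Proof.
move=> N_gt0 vB_ij; split=> [M | ].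
  rewrite /orbCoef; case: ifP => _; last exact: rpred0.
  exact/intr_nat/mcoeff_Zorb_nat.
rewrite /orbCoef all_nseq eqn0Ngt N_gt0 /=.
case: ifP => [vB | /negbT vNB]; last first.
  by have /negbTE -> : i != j by apply: contra vNB => /eqP/vB_ij.
have /eqP -> /= := iffLR vB_ij vB.
rewrite mcoeff_Zorb_vacuum //.
- by case: (r == r').
- by rewrite undup_nseq.
- exact: monomial_of_nseq.
Qed.
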